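(* Let $\Omega=(G,\Lambda,\sigma)$ with $G=(V,E)$ be a feasible instance of the $q$-state Potts model with activity $0\le\beta<1$, let $v\in V\setminus\Lambda$ and $B=B_\Omega(v)$. Let $u_1v_1,\dots,u_mv_m$ be an enumeration of the edges of $G$ with $u_i\in B$, $v_i\notin B$ (different indices may share the same $u_i$ or $v_i$). Let $E(B)=\{uw\in E:u,w\in B\}$ and $\bar B=\{u\in B:\exists w\notin B, uw\in E\}$. Let $G_B$ be the graph with vertex set $(V\setminus B)\cup\bar B$ and edge set $E\setminus E(B)$, and $\Omega_B=(G_B,\Lambda,\sigma)$. For $\pi\in\mathcal{F}(B)$ write $\pi_i=\pi(u_i)$, and for $i=1,\dots,m$ let $\Omega_i^\pi$ be the instance obtained from $\Omega_B$ by fixing (adding to the pinned set) $u_j$ to color $\pi_j$ for every $j<i$, and deleting the edges $u_jv_j$ for every $j\ge i$. Then for every $\pi\in\mathcal{F}(B)$, $$\Pr_\Omega[c(B)=\pi]=\frac{w_{G[B]}(\pi)\prod_{i=1}^m\bigl(1-(1-\beta)\Pr_{\Omega_i^\pi}[c(v_i)=\pi_i]\bigr)}{\sum_{\rho\in\mathcal{F}(B)}w_{G[B]}(\rho)\prod_{i=1}^m\bigl(1-(1-\beta)\Pr_{\Omega_i^\rho}[c(v_i)=\rho_i]\bigr)}.$$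
   Context: Potts model: fix an integer $q\ge2$ and a real $\beta\ge0$; $[q]=\{1,\dots,q\}$, $0^0=1$. For a finite graph $G=(V,E)$, an instance is $\Omega=(G,\Lambda,\sigma)$ with $\Lambda\subseteq V$, $\sigma\in[q]^\Lambda$; $w_\Omega(\pi)=\beta^{|\{uv\in E:\pi(u)=\pi(v)\}|}$ if $\pi\in[q]^V$ agrees with $\sigma$ on $\Lambda$, else $0$. $\Omega$ is feasible if some $\pi$ has $w_\Omega(\pi)>0$; then $\Pr_\Omega[c(V)=\pi]=w_\Omega(\pi)/\sum_{\pi'}w_\Omega(\pi')$ and $\Pr_\Omega[c(S)=\cdot]$, $\Pr_\Omega[c(v)=\cdot]$ are its marginals (if $v\in\Lambda$ this is the point mass at $\sigma(v)$). For $S\subseteq V$ and $\rho\in[q]^S$, $w_{G[S]}(\rho)=\beta^{|\{uw\in E:u,w\in S,\rho(u)=\rho(w)\}|}$. For $S\subseteq V\setminus\Lambda$, $\mathcal{F}(S)$ is the set of feasible $\rho\in[q]^S$, i.e. those for which some $\pi\in[q]^V$ with $w_\Omega(\pi)>0$ agrees with $\rho$ on $S$. A vertex is low-degree if $\deg_G(v)<\frac{q-1}{1-\beta}-2$. $\partial B=\{u\in V\setminus B:\exists w\in B,uw\in E\}$; $B\subseteq V\setminus\Lambda$ is a permissive block in $\Omega$ if every $u\in\partial B\setminus\Lambda$ is low-degree; $B_\Omega(S)$ is the minimal permissive block containing $S$. *)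

From HB Require Import structures.
From mathcomp Require Import all_boot all_order all_algebra.
Set Implicit Arguments.
Unset Strict Implicit.
Unset Printing Implicit Defensive.
Import Order.TTheory GRing.Theory Num.Theory.
Local Open Scope ring_scope.

(* Graphs live inside an ambient finite type T.  A graph is a vertex set
   together with a set of edges, each edge being a 2-element subset of T.
   Colours [q] are represented by 'I_q. *)

(* An instance (G, Lambda, sigma) with G = (iV, iE); sigma is given as a total
   function, only its values on Lambda matter. *)
Record instance (T : finType) (q : nat) := Instance {
  iV : {set T};
  iE : {set {set T}};
  iL : {set T};
  isig : T -> 'I_q }.

(* A colouring of a vertex set S (element of [q]^S) is encoded as a finite
   function T -> option 'I_q that is Some exactly on S. *)
Definition on_set (T : finType) (q : nat) (S : {set T})
  (pi : {ffun T -> option 'I_q}) : bool :=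
  [forall x, (pi x != None) == (x \in S)].

Definition mono_count (T : finType) (q : nat) (E : {set {set T}})
  (pi : {ffun T -> option 'I_q}) : nat :=
  #|[set f in E | [forall x in f, forall y in f, pi x == pi y]]|.

Definition weight (R : numDomainType) (beta : R) (T : finType) (q : nat)
  (I : instance T q) (pi : {ffun T -> option 'I_q}) : R :=
  if on_set (iV I) pi && [forall x in iL I, pi x == Some (isig I x)]
  then beta ^+ mono_count (iE I) pi else 0.

Definition partition_fn (R : numDomainType) (beta : R) (T : finType) (q : nat)
  (I : instance T q) : R :=
  \sum_(pi : {ffun T -> option 'I_q}) weight beta I pi.

Definition feasible (R : numDomainType) (beta : R) (T : finType) (q : nat)
  (I : instance T q) : Prop :=
  exists pi : {ffun T -> option 'I_q}, 0 < weight beta I pi.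

Definition PrV (R : numFieldType) (beta : R) (T : finType) (q : nat)
  (I : instance T q) (v : T) (c : option 'I_q) : R :=
  (\sum_(pi : {ffun T -> option 'I_q} | pi v == c) weight beta I pi)
    / partition_fn beta I.

Definition PrS (R : numFieldType) (beta : R) (T : finType) (q : nat)
  (I : instance T q) (S : {set T}) (rho : {ffun T -> option 'I_q}) : R :=
  (\sum_(pi : {ffun T -> option 'I_q} | [forall x in S, pi x == rho x])
      weight beta I pi) / partition_fn beta I.

Definition feasible_set (R : numDomainType) (beta : R) (T : finType) (q : nat)
  (I : instance T q) (S : {set T}) : {set {ffun T -> option 'I_q}} :=
  [set rho | on_set S rho &&
     [exists pi, (0 < weight beta I pi) && [forall x in S, pi x == rho x]]].

Definition w_sub (R : numDomainType) (beta : R) (T : finType) (q : nat)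
  (E : {set {set T}}) (S : {set T}) (rho : {ffun T -> option 'I_q}) : R :=
  beta ^+ #|[set f in E | (f \subset S) &&
                [forall x in f, forall y in f, rho x == rho y]]|.

Definition degree (T : finType) (E : {set {set T}}) (v : T) : nat :=
  #|[set f in E | v \in f]|.

Definition low_degree (R : numFieldType) (beta : R) (q : nat) (T : finType)
  (E : {set {set T}}) (v : T) : bool :=
  (degree E v)%:R < (q%:R - 1) / (1 - beta) - 2.

Definition boundary (T : finType) (V : {set T}) (E : {set {set T}})
  (B : {set T}) : {set T} :=
  [set u in V :\: B | [exists w in B, [set u; w] \in E]].

Definition permissive (R : numFieldType) (beta : R) (T : finType) (q : nat)
  (I : instance T q) (B : {set T}) : bool :=
  (B \subset iV I :\: iL I) &&
  [forall u in boundary (iV I) (iE I) B :\: iL I, low_degree beta q (iE I) u].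

Definition inner_edges (T : finType) (E : {set {set T}}) (B : {set T}) :
  {set {set T}} := [set f in E | f \subset B].

Definition inner_boundary (T : finType) (V : {set T}) (E : {set {set T}})
  (B : {set T}) : {set T} :=
  [set u in B | [exists w in V :\: B, [set u; w] \in E]].

(* For a colouring r of B, the weight of a configuration extending r factors as
   w_{G[B]}(r) times its weight in Omega_B with \bar B pinned to r, so Pr[c(B) = r]
   is proportional to w_{G[B]}(r) Z_m(r), where Z_k(r) is the partition function of
   Omega_{k+1}^r.  Passing from Z_k to Z_{k+1} inserts the edge u_k v_k and pins u_k,
   whence Z_{k+1} = c_k (Z_k - (1 - beta) S_k) with S_k the weight of c(v_k) = r(u_k):
   c_k = 1 if u_k is already pinned, and c_k = 1/q otherwise, because u_k is then an
   isolated free vertex and all its colours are equally likely.  The product of the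
   factors 1 - (1 - beta) S_k / Z_k therefore telescopes to Z_m / Z_0 up to the c_k,
   and neither Z_0 nor the c_k depend on r. *)

From HB Require Import structures.
From mathcomp Require Import all_boot all_order all_algebra perm.
From mathcomp Require Import ring.
Set Implicit Arguments.
Unset Strict Implicit.
Unset Printing Implicit Defensive.
Import Order.TTheory GRing.Theory Num.Theory.
Local Open Scope ring_scope.

Notation colouring T q := {ffun T -> option 'I_q}.

Section Weight.
Variables (R : numDomainType) (beta : R) (T : finType) (q : nat).
Variable I : instance T q.
Implicit Types pi : colouring T q.

Lemma weight_ge0 pi : 0 <= beta -> 0 <= weight beta I pi.
Proof. by move=> b0; rewrite /weight; case: ifP => // _; exact: exprn_ge0. Qed.

Lemma weight_neq0_pinned pi x :
  weight beta I pi != 0 -> x \in iL I -> pi x = Some (isig I x).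
Proof.
rewrite /weight; case: ifP => [/andP[_ /forall_inP H] _ xL|]; last by rewrite eqxx.
exact/eqP/H/xL.
Qed.

Lemma weight_neq0_dom pi x :
  weight beta I pi != 0 -> (pi x != None) = (x \in iV I).
Proof.
rewrite /weight; case: ifP => [/andP[/forallP H _] _|]; last by rewrite eqxx.
exact: (eqP (H x)).
Qed.

Definition recolour_at (u : T) (p : {perm 'I_q}) pi : colouring T q :=
  [ffun x => if x == u then omap p (pi x) else pi x].

Lemma recolour_at_inj u p : injective (recolour_at u p).
Proof.
move=> pi pi' /ffunP eq_pi; apply/ffunP => x; move: (eq_pi x); rewrite !ffunE.
by case: eqP => // _; apply: inj_omap; apply: perm_inj.
Qed.

Lemma mono_edge_eq pi pi' (f : {set T}) : {in f, pi =1 pi'} ->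
  [forall x in f, forall y in f, pi x == pi y] =
  [forall x in f, forall y in f, pi' x == pi' y].
Proof.
move=> eq_f; apply: eq_forallb => x; case xf: (x \in f) => //=.
by apply: eq_forallb => y; case yf: (y \in f); rewrite //= !eq_f.
Qed.

Lemma weight_recolour_at u p pi :
  u \notin iL I -> (forall f, f \in iE I -> u \notin f) ->
  weight beta I (recolour_at u p pi) = weight beta I pi.
Proof.
move=> uL uE; rewrite /weight; congr (if _ then _ else _).
  congr (_ && _); apply: eq_forallb => x; rewrite ffunE; case: (eqVneq x u) => // ->.
    by case: (pi u).
  by rewrite (negbTE uL).
congr (_ ^+ _); apply: eq_card => f; rewrite !inE; case fE: (f \in iE I) => //=.
apply: mono_edge_eq => x xf; rewrite ffunE; case: eqP => // xu.
by move: (uE f fE); rewrite -xu xf.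
Qed.

Section FreeVertex.
Variables (u : T) (G : colouring T q -> R).
Hypotheses (uV : u \in iV I) (uL : u \notin iL I).
Hypothesis u_isolated : forall f, f \in iE I -> u \notin f.
Hypothesis G_recolour : forall p pi, G (recolour_at u p pi) = G pi.

Lemma sum_weight_recolour (p : {perm 'I_q}) (c : 'I_q) :
  \sum_pi weight beta I pi * ((pi u == Some (p c))%:R * G pi) =
  \sum_pi weight beta I pi * ((pi u == Some c)%:R * G pi).
Proof.
rewrite (reindex_inj (@recolour_at_inj u p)) /=; apply: eq_bigr => pi _.
rewrite weight_recolour_at // G_recolour ffunE eqxx.
by rewrite -[Some (p c)]/(omap p (Some c)) (inj_eq (inj_omap perm_inj)).
Qed.

Lemma sum_weight_free_vertex (c : 'I_q) :
  \sum_pi weight beta I pi * G pi =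
  q%:R * \sum_pi weight beta I pi * ((pi u == Some c)%:R * G pi).
Proof.
have split_colour pi : weight beta I pi * G pi =
    \sum_(d : 'I_q) weight beta I pi * ((pi u == Some d)%:R * G pi).
  have [->|nz] := eqVneq (weight beta I pi) 0.
    by rewrite mul0r big1 // => d _; rewrite mul0r.
  have := weight_neq0_dom u nz; rewrite uV; case: (pi u) => [d0|] // _.
  rewrite (bigD1 d0) //= eqxx mul1r big1 ?addr0 // => d dd0.
  by rewrite (inj_eq Some_inj) eq_sym (negbTE dd0) mul0r mulr0.
rewrite (eq_bigr _ (fun pi _ => split_colour pi)) exchange_big /=.
under eq_bigr => d _ do rewrite -[X in Some X](tpermL c d) sum_weight_recolour.
by rewrite sumr_const card_ord mulr_natl.
Qed.

End FreeVertex.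
End Weight.

Lemma set2_of_card2 (T : finType) (f : {set T}) x :
  #|f| = 2%N -> x \in f -> exists y, f = [set x; y].
Proof.
move/eqP/cards2P => [a [b [_ ->]]]; rewrite !inE => /orP[]/eqP->.
  by exists b.
by exists a; rewrite setUC.
Qed.

Lemma mono_set2 (T : finType) q (pi : colouring T q) (u w : T) :
  [forall x in [set u; w], forall y in [set u; w], pi x == pi y] = (pi u == pi w).
Proof.
apply/forall_inP/eqP => [H|H x].
  by move/forall_inP: (H u (set21 u w)) => /(_ w (set22 u w))/eqP.
by rewrite !inE => /orP[]/eqP->; apply/forall_inP => y;
  rewrite !inE => /orP[]/eqP->; rewrite ?H.
Qed.

Lemma weight_add_pinned_edge (R : numDomainType) (beta : R) (T : finType) (q : nat)
  (I I' : instance T q) (u w : T) (pi : colouring T q) :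
  iV I' = iV I -> iE I' = [set u; w] |: iE I -> [set u; w] \notin iE I ->
  iL I' = u |: iL I -> isig I' =1 isig I ->
  weight beta I' pi =
  weight beta I pi * ((pi u == Some (isig I u))%:R * beta ^+ (pi u == pi w)).
Proof.
move=> eV eE uwE eL esig; rewrite /weight eV eL.
have -> : [forall x in u |: iL I, pi x == Some (isig I' x)] =
    (pi u == Some (isig I u)) && [forall x in iL I, pi x == Some (isig I x)].
  apply/forall_inP/andP => [H|[H1 /forall_inP H2] x].
    split; first by rewrite -esig; apply: H; rewrite setU11.
    by apply/forall_inP => x xL; rewrite -esig; apply: H; rewrite setU1r.
  by rewrite in_setU1 esig => /orP[/eqP->|/H2].
have -> : mono_count (iE I') pi = ((pi u == pi w) + mono_count (iE I) pi)%N.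
  rewrite /mono_count eE; case: (boolP (pi u == pi w)) => h.
    rewrite (_ : [set f in _ | _] = [set u; w] |: [set f in iE I |
                 [forall x in f, forall y in f, pi x == pi y]]).
      by rewrite cardsU1 inE (negbTE uwE).
    apply/setP => f; rewrite in_setU1 !inE.
    by case: eqVneq => [->|] //=; rewrite mono_set2 h.
  apply: eq_card => f; rewrite !inE.
  by case: eqVneq => [->|] //=; rewrite mono_set2 (negbTE h) andbF.
case: (pi u == Some (isig I u)); rewrite /= ?mul0r ?mulr0 ?mul1r ?andbF //.
by case: ifP => _; rewrite ?mul0r // exprD mulrC.
Qed.

Lemma sumr_restrict_neq0 (R : nmodType) (I : finType) (P : pred I) (F : I -> R) :
  \sum_(x | P x) F x = \sum_(x | P x && (F x != 0)) F x.
Proof.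
rewrite (bigID (fun x => F x != 0)) /= [X in _ + X]big1 ?addr0 //.
by move=> x /andP[_ /negPn/eqP].
Qed.

Lemma recurrence_neq0 (R : numDomainType) (a : R) (Z S c : nat -> R) (m : nat) :
  (forall k, 0 <= S k <= Z k) ->
  (forall k, (k < m)%N -> Z k.+1 = c k * (Z k - a * S k)) ->
  Z m != 0 -> forall k, (k <= m)%N -> Z k != 0.
Proof.
move=> SZ rec Zm k km; apply: contra Zm => /eqP Zk.
suff Z0 : forall d, (k + d <= m)%N -> Z (k + d)%N = 0 by rewrite -(subnKC km) Z0 ?subnKC.
elim=> [|d IH] kdm; first by rewrite addn0.
rewrite addnS in kdm *; have Zkd := IH (ltnW kdm).
have S0 : S (k + d)%N = 0.
  by have /andP[S_ge0 S_le] := SZ (k + d)%N; apply/le_anti; rewrite S_ge0 andbT -Zkd.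
by rewrite rec // Zkd S0 mulr0 subrr mulr0.
Qed.

Lemma prod_telescope (R : fieldType) (a : R) (Z S c : nat -> R) (m : nat) :
  (forall k, (k < m)%N -> Z k.+1 = c k * (Z k - a * S k)) ->
  (forall k, (k <= m)%N -> Z k != 0) -> (forall k, c k != 0) ->
  \prod_(i < m) (1 - a * (S i / Z i)) = Z m / Z 0 * \prod_(i < m) (c i)^-1.
Proof.
move=> Z_rec Znz cnz; suff tel n : (n <= m)%N ->
    \prod_(i < n) (1 - a * (S i / Z i)) = Z n / Z 0 * \prod_(i < n) (c i)^-1 by exact: tel.
elim: n => [|n IH] nm; first by rewrite !big_ord0 divff ?mulr1 ?Znz.
rewrite !big_ord_recr /= IH ?(ltnW nm) // Z_rec //.
by field; rewrite cnz !Znz // ltnW.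
Qed.

Section Block.
Variables (R : realFieldType) (q : nat) (beta : R) (T : finType).
Variables (E : {set {set T}}) (L : {set T}) (sigma : T -> 'I_q).
Variables (v : T) (B : {set T}) (s : seq (T * T)).
Hypotheses (q_gt0 : (0 < q)%N) (beta_ge0 : 0 <= beta).
Hypothesis E_card2 : forall f, f \in E -> #|f| = 2%N.
Hypothesis B_unpinned : forall x, x \in B -> x \notin L.
Hypothesis s_uniq : uniq s.
Hypothesis mem_s :
  forall u w, ((u, w) \in s) = [&& [set u; w] \in E, u \in B & w \notin B].

Local Notation Om := (Instance [set: T] E L sigma).
Local Notation m := (size s).
Local Notation FB := (feasible_set beta Om B).
Implicit Types (r pi : colouring T q).

Definition ui (j : nat) : T := (nth (v, v) s j).1.
Definition vi (j : nat) : T := (nth (v, v) s j).2.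
Definition VB : {set T} := (~: B) :|: inner_boundary [set: T] E B.
Definition EB : {set {set T}} := E :\: inner_edges E B.

Lemma crossing_edge (j : 'I_m) : [&& [set ui j; vi j] \in E, ui j \in B & vi j \notin B].
Proof. by rewrite -mem_s /ui /vi -surjective_pairing mem_nth. Qed.

Lemma crossing_edge_inj : injective (fun j : 'I_m => [set ui j; vi j]).
Proof.
move=> j k /= ejk.
have /and3P[_ ujB vjB] := crossing_edge j; have /and3P[_ ukB vkB] := crossing_edge k.
have eu : ui j = ui k.
  have : ui j \in [set ui k; vi k] by rewrite -ejk set21.
  by rewrite !inE => /orP[/eqP//|/eqP h]; move: vkB; rewrite -h ujB.
have ev : vi j = vi k.
  have : vi j \in [set ui k; vi k] by rewrite -ejk set22.
  by rewrite !inE => /orP[/eqP h|/eqP//]; move: vjB; rewrite h ukB.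
apply/val_inj/eqP; rewrite -(nth_uniq (v, v) _ _ s_uniq) ?ltn_ord //.
rewrite [nth _ _ j]surjective_pairing [nth _ _ k]surjective_pairing.
by rewrite -/(ui j) -/(vi j) eu ev.
Qed.

Lemma crossing_edge_index x w : [set x; w] \in E -> x \in B -> w \notin B ->
  exists j : 'I_m, ui j = x /\ vi j = w.
Proof.
move=> xwE xB wB; have xws : (x, w) \in s by rewrite mem_s xwE xB wB.
have xw_idx : (index (x, w) s < m)%N by rewrite index_mem.
by exists (Ordinal xw_idx); rewrite /ui /vi /= nth_index.
Qed.

Lemma ui_in_VB (j : 'I_m) : ui j \in VB.
Proof.
have /and3P[ujE ujB vjB] := crossing_edge j.
rewrite /VB /inner_boundary !inE ujB /=; apply/existsP; exists (vi j).
by rewrite !inE vjB.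
Qed.

Lemma leaving_edge_index f x : f \in E -> ~~ (f \subset B) -> x \in f -> x \in B ->
  exists j : 'I_m, x = ui j /\ f = [set ui j; vi j].
Proof.
move=> fE fB xf xB; have [z fxz] := set2_of_card2 (E_card2 fE) xf.
have zB : z \notin B.
  apply: contra fB => zB; apply/subsetP => y; rewrite fxz !inE.
  by case/orP => /eqP->.
rewrite fxz in fE *; have [j [<- <-]] := crossing_edge_index fE xB zB.
by exists j.
Qed.

Lemma leaving_edge_in_VB f x : f \in E -> ~~ (f \subset B) -> x \in f -> x \in VB.
Proof.
move=> fE fB xf; case: (boolP (x \in B)) => xB; last by rewrite /VB !inE xB.
by have [j [-> _]] := leaving_edge_index fE fB xf xB; exact: ui_in_VB.
Qed.

Lemma VB_cap_B x : x \in B -> x \in VB -> exists j : 'I_m, ui j = x.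
Proof.
move=> xB; rewrite /VB /inner_boundary !inE xB /= => /existsP[w].
rewrite !inE => /andP[/andP[wB _] xwE].
by have [j [? _]] := crossing_edge_index xwE xB wB; exists j.
Qed.

Lemma mem_EB f : (f \in EB) = (f \in E) && ~~ (f \subset B).
Proof. by rewrite /EB /inner_edges !inE andbC; case: (f \in E). Qed.

Definition cut_edges (k : nat) : {set {set T}} :=
  [set [set ui j; vi j] | j : 'I_m & (k <= j)%N].
Definition pinned_ends (k : nat) : {set T} := [set ui j | j : 'I_m & (j < k)%N].

Lemma cut_edgesS k : (k < m)%N ->
  cut_edges k = [set ui k; vi k] |: cut_edges k.+1 /\
  [set ui k; vi k] \notin cut_edges k.+1.
Proof.
move=> km; split.
  apply/setP => f; rewrite in_setU1; apply/imsetP/orP => [[j]|].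
    rewrite inE leq_eqVlt => /orP[/eqP kj|kj] ->; first by left; rewrite kj.
    by right; apply/imsetP; exists j; rewrite ?inE.
  case=> [/eqP->|/imsetP[j]]; first by exists (Ordinal km); rewrite ?inE.
  by rewrite inE => kj ->; exists j; rewrite // inE ltnW.
apply/imsetP => -[j]; rewrite inE => kj /(@crossing_edge_inj (Ordinal km)) ekj.
by rewrite -ekj ltnn in kj.
Qed.

Lemma cut_edges_size : cut_edges m = set0.
Proof.
by apply/setP => f; rewrite inE; apply/imsetP => -[j]; rewrite inE leqNgt ltn_ord.
Qed.

Lemma pinned_ends0 : pinned_ends 0 = set0.
Proof. by apply/setP => x; rewrite inE; apply/imsetP => -[j]; rewrite inE ltn0. Qed.

Lemma pinned_endsS k : (k < m)%N -> pinned_ends k.+1 = ui k |: pinned_ends k.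
Proof.
move=> km; apply/setP => x; rewrite in_setU1; apply/imsetP/orP => [[j]|].
  rewrite inE ltnS leq_eqVlt => /orP[/eqP kj|kj] ->; first by left; rewrite kj.
  by right; apply/imsetP; exists j; rewrite ?inE.
case=> [/eqP->|/imsetP[j]]; first by exists (Ordinal km); rewrite ?inE.
by rewrite inE => kj ->; exists j; rewrite // inE ltnW.
Qed.

Definition bcol (r : colouring T q) (x : T) : 'I_q :=
  if x \in L then sigma x else odflt (sigma x) (r x).

(* [stage r k] is the paper's Omega_{k+1}^r; [stage r m] is Omega_B with \bar B
   pinned to r. *)
Definition stage (r : colouring T q) (k : nat) : instance T q :=
  Instance VB (EB :\: cut_edges k) (L :|: pinned_ends k) (bcol r).

Definition Zstage r k : R := partition_fn beta (stage r k).
Definition Sstage r k : R :=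
  \sum_(pi : colouring T q | pi (vi k) == r (ui k)) weight beta (stage r k) pi.
Definition pin_factor k : R := if ui k \in pinned_ends k then 1 else q%:R^-1.

Lemma feasible_dom r x : r \in FB -> (r x != None) = (x \in B).
Proof. by rewrite inE => /andP[/forallP H _]; exact: (eqP (H x)). Qed.

Lemma feasible_bcol r x : r \in FB -> x \in B -> r x = Some (bcol r x).
Proof.
move=> rF xB; have := feasible_dom x rF; rewrite xB /bcol (negbTE (B_unpinned xB)).
by case: (r x).
Qed.

Lemma weight_stageS r k pi : r \in FB -> (k < m)%N ->
  weight beta (stage r k.+1) pi = weight beta (stage r k) pi *
    ((pi (ui k) == r (ui k))%:R * beta ^+ (pi (ui k) == pi (vi k))).
Proof.
move=> rF km; have /and3P[ukE ukB vkB] := crossing_edge (Ordinal km).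
have [cutS cut_notin] := cut_edgesS km.
have ek_EB : [set ui k; vi k] \in EB.
  by rewrite mem_EB ukE; apply: contra vkB => /subsetP; apply; rewrite set22.
rewrite (feasible_bcol rF ukB); apply: weight_add_pinned_edge => //=.
- apply/setP => f; rewrite in_setU1 !(in_setD EB) cutS in_setU1.
  by case: eqVneq => [->|] //=; rewrite ek_EB cut_notin.
- by rewrite in_setD cutS setU11.
- by rewrite pinned_endsS // setUCA.
Qed.

Lemma ui_free_in_stage r k : (k < m)%N -> ui k \notin pinned_ends k ->
  forall f, f \in iE (stage r k) -> ui k \notin f.
Proof.
move=> km ukU f; rewrite /= in_setD mem_EB => /and3P[f_cut fE fB].
have /and3P[_ ukB _] := crossing_edge (Ordinal km).
apply/negP => ukf; have [j [ekj efj]] := leaving_edge_index fE fB ukf ukB.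
case: (leqP k j) => kj.
  by move/negP: f_cut; apply; apply/imsetP; exists j; rewrite ?inE.
by move/negP: ukU; apply; apply/imsetP; exists j; rewrite ?inE.
Qed.

(* If u_k is already pinned the indicator is 1 on the support; otherwise u_k is a
   free vertex of the stage and takes the colour r(u_k) with relative weight 1/q. *)
Lemma sum_weight_pin_ui r k (G : colouring T q -> R) : r \in FB -> (k < m)%N ->
  (forall p pi, G (recolour_at (ui k) p pi) = G pi) ->
  \sum_pi weight beta (stage r k) pi * ((pi (ui k) == r (ui k))%:R * G pi) =
  pin_factor k * \sum_pi weight beta (stage r k) pi * G pi.
Proof.
move=> rF km G_inv; have /and3P[_ ukB _] := crossing_edge (Ordinal km).
rewrite /pin_factor (feasible_bcol rF ukB); case: ifP => ukU.
  rewrite mul1r; apply: eq_bigr => pi _.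
  have [->|nz] := eqVneq (weight beta (stage r k) pi) 0; first by rewrite !mul0r.
  by rewrite (weight_neq0_pinned nz) ?eqxx ?mul1r // inE ukU orbT.
have ukL : ui k \notin iL (stage r k) by rewrite inE negb_or B_unpinned ?ukU.
rewrite (@sum_weight_free_vertex _ beta _ _ (stage r k) _ G (ui_in_VB (Ordinal km)) ukL
  (ui_free_in_stage km (negbT ukU)) G_inv (bcol r (ui k))).
by rewrite mulrA mulVf ?mul1r // pnatr_eq0 -lt0n.
Qed.

(* Each weight gains the factor [pi(u_k) = r(u_k)] * beta ^ [pi(u_k) = pi(v_k)],
   and beta ^ b = 1 - (1 - beta) b for a boolean b. *)
Lemma Zstage_succ r k : r \in FB -> (k < m)%N ->
  Zstage r k.+1 = pin_factor k * (Zstage r k - (1 - beta) * Sstage r k).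
Proof.
move=> rF km; have /and3P[_ ukB vkB] := crossing_edge (Ordinal km).
have vk_uk : (vi k == ui k) = false by apply: contraNF vkB => /eqP->.
have Sstage_ind : Sstage r k =
    \sum_pi weight beta (stage r k) pi * (pi (vi k) == r (ui k))%:R.
  by rewrite /Sstage big_mkcond; apply: eq_bigr => pi _; case: ifP; rewrite ?mulr1 ?mulr0.
have -> : Zstage r k.+1 =
    \sum_pi weight beta (stage r k) pi * ((pi (ui k) == r (ui k))%:R * 1) -
    (1 - beta) * \sum_pi weight beta (stage r k) pi *
      ((pi (ui k) == r (ui k))%:R * (pi (vi k) == r (ui k))%:R).
  rewrite /Zstage /partition_fn mulr_sumr -sumrB; apply: eq_bigr => pi _.
  rewrite weight_stageS //; case: (eqVneq (pi (ui k)) (r (ui k))) => [->|_] /=.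
    by rewrite eq_sym; case: (_ == _); rewrite /= ?expr0 ?expr1; ring.
  by ring.
rewrite !sum_weight_pin_ui // => [|p pi]; last by rewrite ffunE vk_uk.
by rewrite Sstage_ind /Zstage /partition_fn; under eq_bigr do rewrite mulr1; ring.
Qed.

Definition restrict (S : {set T}) pi : colouring T q :=
  [ffun x => if x \in S then pi x else None].

Definition block_mass r : R :=
  \sum_(pi : colouring T q | [forall x in B, pi x == r x]) weight beta Om pi.

Lemma L_sub_VB x : x \in L -> x \in VB.
Proof. by move=> xL; rewrite !inE (contraTN (@B_unpinned x) xL). Qed.

(* Restricting to the vertices of G_B moves the edges inside B into the factor w_{G[B]}
   and turns the colours of the inner boundary into pins. *)
Lemma weight_Om_split r pi : r \in FB -> [forall x in B, pi x == r x] ->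
  weight beta Om pi = w_sub beta E B r * weight beta (stage r m) (restrict VB pi).
Proof.
move=> rF /forall_inP pi_r; have {}pi_r x : x \in B -> pi x = r x by move/pi_r/eqP.
have restrictE x : x \in VB -> restrict VB pi x = pi x by move=> xV; rewrite ffunE xV.
have dom_eq : on_set [set: T] pi = on_set VB (restrict VB pi).
  apply: eq_forallb => x; rewrite ffunE in_setT; case xV: (x \in VB) => //.
  have xB : x \in B by move: xV; rewrite !inE; case: (x \in B).
  by rewrite pi_r // feasible_dom // xB.
have pin_eq : [forall x in L, pi x == Some (sigma x)] =
    [forall x in L :|: pinned_ends m, restrict VB pi x == Some (bcol r x)].
  apply/forall_inP/forall_inP => H x.
    rewrite in_setU => /orP[xL|/imsetP[j _ ->]].
      by rewrite restrictE ?L_sub_VB // /bcol xL; exact: H.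
    have /and3P[_ ujB _] := crossing_edge j.
    by rewrite restrictE ?ui_in_VB // pi_r // feasible_bcol.
  by move=> xL; have := H x; rewrite in_setU xL restrictE ?L_sub_VB // /bcol xL; apply.
have mono_split : mono_count E pi =
    (#|[set f in E | (f \subset B) && [forall x in f, forall y in f, r x == r y]]|
     + mono_count (EB :\: cut_edges m) (restrict VB pi))%N.
  rewrite cut_edges_size setD0 /mono_count -(cardsID [set f : {set T} | f \subset B]).
  congr (_ + _)%N; apply: eq_card => f;
    rewrite !inE; case fE: (f \in E); rewrite /= ?andbF //.
    case fB: (f \subset B); rewrite /= ?andbF // andbT.
    by apply: mono_edge_eq => x /(subsetP fB); exact: pi_r.
  case fB: (f \subset B) => //=; apply: mono_edge_eq => x xf.
  by rewrite restrictE // (leaving_edge_in_VB fE (negbT fB) xf).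
rewrite /weight /= dom_eq pin_eq mono_split /w_sub.
by case: ifP => _; [rewrite exprD | rewrite mulr0].
Qed.

Lemma block_mass_stage r : r \in FB -> block_mass r = w_sub beta E B r * Zstage r m.
Proof.
move=> rF; pose extend pi : colouring T q := [ffun x => if x \in B then r x else pi x].
rewrite /Zstage /partition_fn (sumr_restrict_neq0 xpredT).
rewrite (reindex_onto (restrict VB) extend) /=.
  rewrite mulr_sumr /block_mass big_mkcond [RHS]big_mkcond; apply: eq_bigr => pi _ /=.
  have -> : (extend (restrict VB pi) == pi) = [forall x in B, pi x == r x].
    apply/eqP/forall_inP => [<- x xB | pi_r]; first by rewrite !ffunE xB.
    apply/ffunP => x; rewrite !ffunE; case: ifP => xB; first by rewrite (eqP (pi_r x xB)).
    by rewrite !inE xB.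
  case: ifP => pi_r; rewrite ?andbF // andbT (weight_Om_split rF pi_r).
  by have [->|] := eqVneq (weight beta (stage r m) (restrict VB pi)) 0; rewrite ?mulr0.
move=> pi nz; apply/ffunP => x; rewrite !ffunE; case xV: (x \in VB); last first.
  by have := weight_neq0_dom x nz; rewrite /= xV; case: (pi x).
case: ifP => xB //; have [j ujx] := VB_cap_B xB xV.
rewrite (weight_neq0_pinned nz) ?feasible_bcol //.
by rewrite inE; apply/orP; right; apply/imsetP; exists j; rewrite ?inE.
Qed.

Lemma block_mass_gt0 r : r \in FB -> 0 < block_mass r.
Proof.
rewrite inE => /andP[_ /existsP[pi /andP[w_gt0 pi_r]]].
rewrite /block_mass (bigD1 pi) //= ltr_wpDr // sumr_ge0 // => pi' _.
exact: weight_ge0.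
Qed.

Lemma partition_Om : partition_fn beta Om = \sum_(r in FB) block_mass r.
Proof.
rewrite /partition_fn (sumr_restrict_neq0 xpredT) (partition_big (restrict B) (mem FB)) /=.
  apply: eq_bigr => r rF.
  rewrite /block_mass (sumr_restrict_neq0 (fun pi => [forall x in B, _])).
  apply: eq_bigl => pi /=; case nz: (weight beta Om pi != 0); rewrite ?andbF ?andbT //.
  apply/eqP/forall_inP => [<- x xB | pi_r]; first by rewrite ffunE xB.
  apply/ffunP => x; rewrite ffunE; case: ifP => xB; first by rewrite (eqP (pi_r x xB)).
  by have := feasible_dom x rF; rewrite xB; case: (r x).
move=> pi nz; rewrite inE; apply/andP; split.
  apply/forallP => x; rewrite ffunE; case: ifP => xB //.
  by rewrite (weight_neq0_dom x nz) in_setT.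
apply/existsP; exists pi; rewrite lt0r nz weight_ge0 //=.
by apply/forall_inP => x xB; rewrite ffunE xB.
Qed.

Lemma Zstage0_indep r r' : Zstage r 0 = Zstage r' 0.
Proof.
rewrite /Zstage /partition_fn; apply: eq_bigr => pi _.
rewrite /weight /= pinned_ends0 setU0; congr (if _ && _ then _ else _).
by apply: eq_forallb_in => x xL; rewrite /bcol xL.
Qed.

Lemma Zstage_neq0 r k : r \in FB -> (k <= m)%N -> Zstage r k != 0.
Proof.
move=> rF; apply: (@recurrence_neq0 _ (1 - beta) _ (Sstage r) pin_factor).
- move=> j; rewrite /Sstage /Zstage /partition_fn sumr_ge0 ?big_mkcond /=.
  + by apply: ler_sum => pi _; case: ifP => _; rewrite ?weight_ge0.
  + by move=> pi _; exact: weight_ge0.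
- by move=> j; exact: Zstage_succ.
- apply: contraTneq (block_mass_gt0 rF).
  by rewrite block_mass_stage // => ->; rewrite mulr0 ltxx.
Qed.

Lemma pin_factor_neq0 k : pin_factor k != 0.
Proof.
by rewrite /pin_factor; case: ifP; rewrite ?oner_neq0 // invr_eq0 pnatr_eq0 -lt0n.
Qed.

Definition block_factor r : R :=
  w_sub beta E B r *
  \prod_(i < m) (1 - (1 - beta) * PrV beta (stage r i) (vi i) (r (ui i))).

Lemma block_factorE r : r \in FB ->
  block_factor r = block_mass r * (\prod_(i < m) (pin_factor i)^-1 / Zstage r 0).
Proof.
move=> rF; rewrite /block_factor (_ : \prod_(i < m) _ =
    \prod_(i < m) (1 - (1 - beta) * (Sstage r i / Zstage r i))) //.
rewrite (prod_telescope (fun k => @Zstage_succ r k rF)) ?block_mass_stage //.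
- by ring.
- by move=> k; exact: Zstage_neq0.
- exact: pin_factor_neq0.
Qed.

Theorem block_marginal rho : rho \in FB ->
  PrS beta Om B rho = block_factor rho / \sum_(r in FB) block_factor r.
Proof.
move=> rhoF; set K := \prod_(i < m) (pin_factor i)^-1 / Zstage rho 0.
have factorE r : r \in FB -> block_factor r = block_mass r * K.
  by move=> rF; rewrite block_factorE // (Zstage0_indep r rho).
have K_neq0 : K != 0.
  rewrite mulf_neq0 ?invr_eq0 ?Zstage_neq0 // prodf_seq_neq0.
  by apply/allP => i _; rewrite invr_eq0 pin_factor_neq0.
rewrite /PrS -/(block_mass rho) partition_Om (factorE rho rhoF) (eq_bigr _ factorE).
by rewrite -mulr_suml invfM mulrACA mulfV ?mulr1.
Qed.

End Block.

Unset Implicit Arguments.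
Set Strict Implicit.

Theorem mainTheorem6 (R : realFieldType) (q : nat) (beta : R) (T : finType)
  (E : {set {set T}}) (L : {set T}) (sigma : T -> 'I_q) (v : T)
  (B : {set T}) (s : seq (T * T)) (rho : {ffun T -> option 'I_q}) :
  (2 <= q)%N -> 0 <= beta -> beta < 1 ->
  (forall f, f \in E -> #|f| = 2%N) ->
  let Om := Instance [set: T] E L sigma in
  feasible beta Om ->
  v \notin L ->
  minset (fun X : {set T} => permissive beta Om X && (v \in X)) B ->
  uniq s ->
  (forall u w, ((u, w) \in s) = [&& [set u; w] \in E, u \in B & w \notin B]) ->
  rho \in feasible_set beta Om B ->
  let m := size s in
  let ui := fun j : nat => (nth (v, v) s j).1 in
  let vi := fun j : nat => (nth (v, v) s j).2 in
  let VB := (~: B) :|: inner_boundary [set: T] E B in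
  let EB := E :\: inner_edges E B in
  let Omi := fun (r : {ffun T -> option 'I_q}) (i : 'I_m) =>
    Instance VB
      (EB :\: [set [set ui j; vi j] | j : 'I_m & (i <= j)%N])
      (L :|: [set ui j | j : 'I_m & (j < i)%N])
      (fun x => if x \in L then sigma x else odflt (sigma x) (r x)) in
  let F := fun r : {ffun T -> option 'I_q} =>
    w_sub beta E B r *
    \prod_(i < m) (1 - (1 - beta) * PrV beta (Omi r i) (vi i) (r (ui i))) in
  PrS beta Om B rho = F rho / \sum_(r in feasible_set beta Om B) F r.
Proof.
move=> q_ge2 beta_ge0 _ E_card2 Om _ _ minB s_uniq mem_s rhoF.
have B_unpinned x : x \in B -> x \notin L.
  case/minsetP: minB => /andP[/andP[/subsetP B_sub _] _] _ /B_sub.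
  by rewrite !inE => /andP[].
exact: (block_marginal v (ltnW q_ge2) beta_ge0 E_card2 B_unpinned s_uniq mem_s rhoF).
Qed.
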